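(* Let $(L,[\cdot,\cdot],\alpha)$ be a Hom-Lie algebra over a field $F$ and let $\mu:L\to[0,1]$ be a fuzzy subset of $L$. Then the following are equivalent: (i) $\mu$ is a fuzzy Hom-Lie ideal of $L$; (ii) for every $t\in\mathrm{Im}(\mu)$ such that the strong upper level set $U(\mu^>,t)=\{x\in L:\mu(x)>t\}$ is nonempty, $U(\mu^>,t)$ is a Hom-Lie ideal of $L$.
   Context: A Hom-Lie algebra over $F$ is a triple $(L,[\cdot,\cdot],\alpha)$ with $L$ an $F$-vector space, $\alpha:L\to L$ linear and $[\cdot,\cdot]:L\times L\to L$ bilinear, such that $[x,y]=-[y,x]$ and $[\alpha(x),[y,z]]+[\alpha(y),[z,x]]+[\alpha(z),[x,y]]=0$ for all $x,y,z\in L$. A Hom-Lie subalgebra is a subspace $H$ with $\alpha(H)\subseteq H$ and $[x,y]\in H$ for all $x,y\in H$; it is a Hom-Lie ideal if moreover $[x,y]\in H$ for all $x\in H$, $y\in L$. A fuzzy subset of $L$ is a map $\mu:L\to[0,1]$. Writing $a\wedge b=\min\{a,b\}$, $a\vee b=\max\{a,b\}$, $\mu$ is a fuzzy Hom-Lie ideal if for all $x,y\in L$, $c\in F$: $\mu(x+y)\ge\mu(x)\wedge\mu(y)$, $\mu(cx)\ge\mu(x)$, $\mu([x,y])\ge\mu(x)\vee\mu(y)$, and $\mu(\alpha(x))\ge\mu(x)$. *)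

From HB Require Import structures.
From mathcomp Require Import all_boot all_order all_algebra.
From mathcomp Require Import reals.
Set Implicit Arguments. Unset Strict Implicit. Unset Printing Implicit Defensive.
Import Order.TTheory GRing.Theory Num.Theory.
Local Open Scope ring_scope.

Section HomLie.
Variables (F : fieldType) (L : lmodType F).

Definition is_HomLie (br : L -> L -> L) (alpha : L -> L) : Prop :=
  [/\ (forall (a : F) (x y z : L), br (a *: x + y) z = a *: br x z + br y z),
      (forall (a : F) (x y z : L), br x (a *: y + z) = a *: br x y + br x z),
      (forall (a : F) (x y : L), alpha (a *: x + y) = a *: alpha x + alpha y),
      (forall x y : L, br x y = - br y x) &
      (forall x y z : L,
         br (alpha x) (br y z) + br (alpha y) (br z x) + br (alpha z) (br x y) = 0)].

Definition is_subspace (H : L -> Prop) : Prop :=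
  [/\ H 0,
      (forall x y, H x -> H y -> H (x + y)) &
      (forall (c : F) x, H x -> H (c *: x))].

Definition is_HomLie_ideal (br : L -> L -> L) (alpha : L -> L) (H : L -> Prop) : Prop :=
  [/\ is_subspace H,
      (forall x, H x -> H (alpha x)) &
      (forall x y, H x -> H (br x y))].

Variable R : realType.

Definition is_fuzzy_subset (mu : L -> R) : Prop := forall x, 0 <= mu x <= 1.

Definition is_fuzzy_HomLie_ideal (br : L -> L -> L) (alpha : L -> L) (mu : L -> R) : Prop :=
  [/\ (forall x y, Num.min (mu x) (mu y) <= mu (x + y)),
      (forall (c : F) x, mu x <= mu (c *: x)),
      (forall x y, Num.max (mu x) (mu y) <= mu (br x y)) &
      (forall x, mu x <= mu (alpha x))].

Definition strong_upper_level (mu : L -> R) (t : R) : L -> Prop := fun x => t < mu x.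

End HomLie.

(* If [mu] is a fuzzy ideal, each closure property of [U(mu^>, t)] follows from
   the matching inequality for [mu] by transitivity of [<]. Conversely, were
   [mu (f x) < mu x] for one of the operations [f], the level set at
   [t = mu (f x)], which is in the image of [mu] and contains [x], would be an
   ideal containing [f x], i.e. [mu (f x) < mu (f x)]. *)

From HB Require Import structures.
From mathcomp Require Import all_boot all_order all_algebra.
From mathcomp Require Import reals.
Import Order.TTheory GRing.Theory Num.Theory.
Local Open Scope ring_scope.

Section StrongLevelSets.
Variables (F : fieldType) (L : lmodType F) (br : L -> L -> L) (alpha : L -> L).

Lemma HomLie_ideal_br_r (H : L -> Prop) :
  (forall x y, br x y = - br y x) -> is_HomLie_ideal br alpha H ->
  forall x y, H y -> H (br x y).
Proof.
move=> skew [[_ _ scaleH] _ brH] x y Hy.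
by rewrite skew -scaleN1r; apply/scaleH/brH.
Qed.

Variables (R : realType) (mu : L -> R).

Lemma fuzzy_HomLie_ideal_level (t : R) :
  is_fuzzy_HomLie_ideal br alpha mu -> (exists x, strong_upper_level mu t x) ->
  is_HomLie_ideal br alpha (strong_upper_level mu t).
Proof.
rewrite /strong_upper_level => -[muD muZ muBr muAlpha] [x0 ltx0].
split; first split.
- by rewrite -(scale0r x0); apply: lt_le_trans (muZ _ _).
- by move=> x y ltx lty; apply: lt_le_trans (muD x y); rewrite lt_min ltx.
- by move=> c x ltx; apply: lt_le_trans (muZ _ _).
- by move=> x ltx; apply: lt_le_trans (muAlpha _).
- by move=> x y ltx; apply: lt_le_trans (muBr x y); rewrite lt_max ltx.
Qed.

Lemma le_min_level (x y z : L) :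
  (strong_upper_level mu (mu z) x -> strong_upper_level mu (mu z) y ->
   strong_upper_level mu (mu z) z) ->
  Num.min (mu x) (mu y) <= mu z.
Proof.
move=> stable; rewrite leNgt lt_min; apply/negP => /andP[ltx lty].
by have := stable ltx lty; rewrite /strong_upper_level ltxx.
Qed.

Lemma le_level (x y : L) :
  (strong_upper_level mu (mu y) x -> strong_upper_level mu (mu y) y) ->
  mu x <= mu y.
Proof.
by move=> stable; rewrite -[mu x]minxx; apply: le_min_level => ltx _; apply: stable.
Qed.

Lemma level_ideals_fuzzy_HomLie_ideal :
  (forall x y, br x y = - br y x) ->
  (forall t : R, (exists x0, mu x0 = t) ->
     (exists x, strong_upper_level mu t x) ->
     is_HomLie_ideal br alpha (strong_upper_level mu t)) ->
  is_fuzzy_HomLie_ideal br alpha mu.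
Proof.
move=> skew levels.
have ideal_at y x : strong_upper_level mu (mu y) x ->
    is_HomLie_ideal br alpha (strong_upper_level mu (mu y)).
  by move=> ltx; apply: levels; [exists y | exists x].
split.
- move=> x y; apply: le_min_level => ltx lty.
  by have [[_ addH _] _ _] := ideal_at _ _ ltx; apply: addH.
- move=> c x; apply: le_level => ltx.
  by have [[_ _ scaleH] _ _] := ideal_at _ _ ltx; apply: scaleH.
- move=> x y; rewrite ge_max; apply/andP; split; apply: le_level => lt.
  + by have [_ _ brH] := ideal_at _ _ lt; apply: brH.
  + exact: HomLie_ideal_br_r (ideal_at _ _ lt) _ _ lt.
- move=> x; apply: le_level => ltx.
  by have [_ alphaH _] := ideal_at _ _ ltx; apply: alphaH.
Qed.

End StrongLevelSets.

Theorem theorem4p4 (F : fieldType) (L : lmodType F) (br : L -> L -> L)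
  (alpha : L -> L) (R : realType) (mu : L -> R) :
  is_HomLie br alpha -> is_fuzzy_subset mu ->
  (is_fuzzy_HomLie_ideal br alpha mu <->
   (forall t : R, (exists x0, mu x0 = t) ->
      (exists x, strong_upper_level mu t x) ->
      is_HomLie_ideal br alpha (strong_upper_level mu t))).
Proof.
move=> [_ _ _ skew _] _; split=> [fuzzy t _ | levels].
- exact: fuzzy_HomLie_ideal_level.
- exact: level_ideals_fuzzy_HomLie_ideal.
Qed.
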